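(* Fix a full realization $\mathbf{y}_{\mathcal{W}}$ of the profiles. The allocation policy of \textsc{SeqTGreedy} (defined in the context) is monotone: for every user $i$ and every fixed bids $b_{-i}$ of the other users, if $b'_i\le b_i$ and $i$ is selected when the bids are $(b_i,b_{-i})$, then $i$ is also selected when the bids are $(b'_i,b_{-i})$.
   Context: Setting. $\mathcal{V}$ is a finite set and $f:2^{\mathcal{V}}\to\mathbb{R}_{\ge0}$ is monotone and submodular. $\mathcal{W}$ is a finite set of users and $\mathcal{O}\subseteq 2^{\mathcal{V}}$. Each user $w$ has a random sensing profile $Y_w$ with values in $\mathcal{O}$; the $Y_w$ are independent with known distributions. For $\mathcal{S}\subseteq\mathcal{W}$ and values $y_s$, write $\mathbf{y}_{\mathcal{S}}=\{(s,y_s):s\in\mathcal{S}\}$ and $g(\mathbf{y}_{\mathcal{S}})=f(\bigcup_{s\in\mathcal{S}}y_s)$. The conditional expected marginal gain is $\Delta_g(w\mid\mathbf{y}_{\mathcal{S}})=\sum_{y\in\mathcal{O}}P(Y_w=y\mid\mathbf{y}_{\mathcal{S}})\,[g(\mathbf{y}_{\mathcal{S}}\cup\{(w,y)\})-g(\mathbf{y}_{\mathcal{S}})]$. Users report bids $b_w\ge 0$; budget $\mathcal{B}>0$, parameter $\alpha\ge1$. Allocation policy of \textsc{SeqTGreedy}. Set $\mathcal{S}=\emptyset$, $\mathbf{y}_{\mathcal{S}}=\emptyset$, $\mathcal{W}'=\mathcal{W}$. While $\mathcal{W}'\ne\emptyset$: let $w^*\in\arg\max_{w\in\mathcal{W}'}\Delta_g(w\mid\mathbf{y}_{\mathcal{S}})/b_w$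 and $\Delta_{w^*}=\Delta_g(w^*\mid\mathbf{y}_{\mathcal{S}})$. If $\sum_{s\in\mathcal{S}}b_s+b_{w^*}\le\mathcal{B}$: if moreover $b_{w^*}\le\frac{\mathcal{B}}{\alpha}\cdot\frac{\Delta_{w^*}}{\sum_{s\in\mathcal{S}}\Delta_s+\Delta_{w^*}}$ then add $w^*$ to $\mathcal{S}$ (recording $\Delta_{w^*}$), observe $y_{w^*}$ (its value in the fixed realization $\mathbf{y}_{\mathcal{W}}$), add $(w^*,y_{w^*})$ to $\mathbf{y}_{\mathcal{S}}$, remove $w^*$ from $\mathcal{W}'$; otherwise stop. If the budget test fails, remove $w^*$ from $\mathcal{W}'$. *)

From mathcomp Require Import all_boot all_order all_algebra.
Set Implicit Arguments. Unset Strict Implicit. Unset Printing Implicit Defensive.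
Import Order.TTheory GRing.Theory Num.Theory.
Local Open Scope ring_scope.

Section SeqTGreedy.
Variables (R : realFieldType) (V W : finType).

Definition set_fun_nonneg (f : {set V} -> R) := forall A, 0 <= f A.
Definition set_fun_monotone (f : {set V} -> R) :=
  forall A B : {set V}, A \subset B -> f A <= f B.
Definition set_fun_submodular (f : {set V} -> R) :=
  forall A B : {set V}, f (A :|: B) + f (A :&: B) <= f A + f B.

(* p w y = P(Y_w = y); the profile distribution of user w, supported on O *)
Definition is_profile_distr (O : {set {set V}}) (p : W -> {set V} -> R) :=
  forall w, (forall y, 0 <= p w y) /\ (forall y, y \notin O -> p w y = 0)
            /\ \sum_(y in O) p w y = 1.

Variables (f : {set V} -> R) (O : {set {set V}}) (p : W -> {set V} -> R)
          (yW : W -> {set V}).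

(* g(y_S) = f (union of y_s, s in S), profiles taken from the fixed
   realization yW *)
Definition g (S : {set W}) : {set V} := \bigcup_(s in S) yW s.

(* conditional expected marginal gain; by independence of the Y_w,
   P(Y_w = y | y_S) = P(Y_w = y) for w notin S *)
Definition cond_gain (w : W) (S : {set W}) : R :=
  \sum_(y in O) p w y * (f (g S :|: y) - f (g S)).

Variables (rk : W -> nat) (* fixed tie-breaking priority for the argmax *)
          (budget alpha : R) (b : W -> R).

Definition ratio (S : {set W}) (w : W) : R := cond_gain w S / b w.

Definition beats (S : {set W}) (w v : W) : bool :=
  (ratio S v < ratio S w) || ((ratio S v == ratio S w) && (rk w <= rk v)%N).

Definition argmax_user (S : {set W}) (W' : {set W}) : option W :=
  [pick w in W' | [forall v in W', beats S w v]].

(* state: selected set S, sum of recorded Delta_s, remaining W', stopped *)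
Record state := State { sel : {set W}; sumD : R; rem : {set W}; stopped : bool }.

Definition step (st : state) : state :=
  if stopped st then st else
  match argmax_user (sel st) (rem st) with
  | None => State (sel st) (sumD st) (rem st) true
  | Some w =>
      let D := cond_gain w (sel st) in
      if \sum_(s in sel st) b s + b w <= budget then
        if b w <= budget / alpha * (D / (sumD st + D)) then
          State (w |: sel st) (sumD st + D) (rem st :\ w) false
        else State (sel st) (sumD st) (rem st) true
      else State (sel st) (sumD st) (rem st :\ w) false
  end.

(* each non-final step removes one user from W', so #|W|.+1 iterations
   reach the final state *)
Definition seqtgreedy_selected : {set W} :=
  sel (iter #|W|.+1 step (State set0 0 [set: W] false)).

End SeqTGreedy.

Definition update_bid (W : finType) (R : Type) (b : W -> R) (i : W) (bi : R) : W -> R :=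
  fun w => if w == i then bi else b w.

(* Call [i] admissible at a state of the run if adding [i] respects the budget
   and [i]'s bid is below the proportional-share threshold.  Along a run the
   selected set and the recorded gains only grow, so by submodularity the
   threshold only decreases: a user selected at some round was admissible at
   every earlier state.  Lowering [i]'s bid raises only [i]'s ratio, so in each
   round the greedy choice either stays the same or becomes [i]; in the latter
   case [i] is admissible with its lower bid and is selected at once.  Hence the
   two runs coincide until [i] is selected in the run with the lower bid. *)

From Pilot Require Import Defs.
From mathcomp Require Import all_boot all_order all_algebra.
From mathcomp Require Import lra.
Import Order.TTheory GRing.Theory Num.Theory.

Set Implicit Arguments.
Unset Strict Implicit.
Unset Printing Implicit Defensive.

Local Open Scope ring_scope.

Section LexArgmax.
Variables (d : Order.disp_t) (R : orderType d) (T : finType) (rk : T -> nat).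
Local Open Scope order_scope.

Definition lex_beats (r : T -> R) (x y : T) : bool :=
  (r y < r x) || ((r y == r x) && (rk x <= rk y)%N).

Definition lex_argmax (r : T -> R) (A : {set T}) : option T :=
  [pick w in A | [forall v in A, lex_beats r w v]].

Variable r : T -> R.

Lemma lex_beats_refl x : lex_beats r x x.
Proof. by rewrite /lex_beats eqxx leqnn orbT. Qed.

Lemma lex_beats_total x y : lex_beats r x y || lex_beats r y x.
Proof.
by rewrite /lex_beats; case: (ltgtP (r y) (r x)) => //= _; rewrite leq_total.
Qed.

Lemma lex_beats_trans y x z : lex_beats r x y -> lex_beats r y z -> lex_beats r x z.
Proof.
rewrite /lex_beats => /orP[lt_yx|/andP[/eqP-> le_xy]] /orP[lt_zy|/andP[/eqP-> le_yz]].
- by rewrite (lt_trans lt_zy lt_yx).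
- by rewrite lt_yx.
- by rewrite lt_zy.
- by rewrite eqxx (leq_trans le_xy le_yz) orbT.
Qed.

Lemma lex_beats_anti x y :
  injective rk -> lex_beats r x y -> lex_beats r y x -> x = y.
Proof.
move=> rk_inj; rewrite /lex_beats.
move=> /orP[lt_yx|/andP[/eqP e_yx le_xy]] /orP[lt_xy|/andP[/eqP e_xy le_yx]].
- by move: (lt_trans lt_yx lt_xy); rewrite ltxx.
- by move: lt_yx; rewrite e_xy ltxx.
- by move: lt_xy; rewrite e_yx ltxx.
- by apply: rk_inj; apply/eqP; rewrite eqn_leq le_xy le_yx.
Qed.

Lemma lex_argmax_eq (A : {set T}) c :
  injective rk -> c \in A -> (forall v, v \in A -> lex_beats r c v) ->
  lex_argmax r A = Some c.
Proof.
move=> rk_inj cA c_max; rewrite /lex_argmax; case: pickP => [u /andP[uA /forall_inP u_max]|].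
  by congr Some; apply: lex_beats_anti rk_inj (u_max c cA) (c_max u uA).
by move=> /(_ c); rewrite cA; move/negbT/forall_inP; case.
Qed.

Lemma lex_argmaxP (A : {set T}) w :
  lex_argmax r A = Some w -> w \in A /\ forall v, v \in A -> lex_beats r w v.
Proof.
rewrite /lex_argmax; case: pickP => // u /andP[uA /forall_inP u_max] [<-].
by split.
Qed.

End LexArgmax.

Lemma lex_argmax_raise d (R : orderType d) (T : finType) (rk : T -> nat)
    (r r' : T -> R) (A : {set T}) (i w : T) :
  injective rk -> (forall v, (r v <= r' v)%O) -> (forall v, v != i -> r' v = r v) ->
  lex_argmax rk r A = Some w ->
  lex_argmax rk r' A = Some w \/ lex_argmax rk r' A = Some i.
Proof.
move=> rk_inj le_rr' eq_rr' /lex_argmaxP[wA w_max].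
have w_beats v : v \in A -> v != i -> lex_beats rk r' w v.
  move=> vA vi; move: (w_max v vA); rewrite /lex_beats (eq_rr' v vi).
  move=> /orP[lt_vw|/andP[/eqP e_vw le_wv]]; first by rewrite (lt_le_trans lt_vw).
  by move: (le_rr' w); rewrite le_eqVlt e_vw => /orP[/eqP->|->]; rewrite ?eqxx ?le_wv ?orbT.
case: (boolP ((i \in A) && ~~ lex_beats rk r' w i)) => [/andP[iA not_wi]|].
  right; apply: lex_argmax_eq => // v vA.
  have beats_iw : lex_beats rk r' i w by move: (lex_beats_total rk r' w i); rewrite (negPf not_wi).
  case: (eqVneq v i) => [->|vi]; first exact: lex_beats_refl.
  exact: lex_beats_trans beats_iw (w_beats v vA vi).
rewrite negb_and negbK => iA_or; left; apply: lex_argmax_eq => // v vA.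
case: (eqVneq v i) => [e|vi]; last exact: w_beats.
by move: iA_or; rewrite -e vA.
Qed.

Lemma ler_sum_subset (R : numDomainType) (T : finType) (F : T -> R) (A B : {set T}) :
  (forall x, 0 <= F x) -> A \subset B -> \sum_(x in A) F x <= \sum_(x in B) F x.
Proof.
move=> F_ge0 sAB; rewrite [X in _ <= X](big_setID A) /= (setIidPr sAB) lerDl.
exact: sumr_ge0.
Qed.

Lemma ler_share (R : realFieldType) (D D1 s s1 : R) :
  0 < D1 -> D1 <= D -> 0 <= s -> s <= s1 -> D1 / (s1 + D1) <= D / (s + D).
Proof.
move=> D1_gt0 le_D1D s_ge0 le_ss1.
have sD1_gt0 : 0 < s1 + D1 by lra.
have sD_gt0 : 0 < s + D by lra.
rewrite ler_pdivrMr // mulrAC ler_pdivlMr //; nra.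
Qed.

Lemma submodular_diminishing (R : realFieldType) (V : finType) (f : {set V} -> R)
    (A B y : {set V}) :
  set_fun_monotone f -> set_fun_submodular f -> A \subset B ->
  f (B :|: y) - f B <= f (A :|: y) - f A.
Proof.
move=> f_mono f_submod sAB.
have := f_submod (A :|: y) B; rewrite setUAC (setUidPr sAB).
have : f A <= f ((A :|: y) :&: B) by apply: f_mono; rewrite subsetI subsetUl sAB.
lra.
Qed.

Section SeqTGreedyMonotone.
Variables (R : realFieldType) (V W : finType) (f : {set V} -> R) (O : {set {set V}})
  (p : W -> {set V} -> R) (yW : W -> {set V}) (rk : W -> nat) (budget alpha : R).
Hypotheses (f_mono : set_fun_monotone f) (f_submod : set_fun_submodular f)
  (p_distr : is_profile_distr O p) (budget_gt0 : 0 < budget) (alpha_ge1 : 1 <= alpha).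

Local Notation gain := (cond_gain f O p yW).
Local Notation greedy_step b := (step f O p yW rk budget alpha b).

Lemma g_subset (S S' : {set W}) : S \subset S' -> g yW S \subset g yW S'.
Proof.
by move=> sSS'; apply/bigcupsP => s sS; apply: (bigcup_sup s); apply: (subsetP sSS').
Qed.

Lemma cond_gain_ge0 w S : 0 <= gain w S.
Proof.
apply: sumr_ge0 => y _; have [p_ge0 _] := p_distr w.
by rewrite mulr_ge0 // subr_ge0 f_mono // subsetUl.
Qed.

Lemma le_cond_gain w (S S' : {set W}) : S \subset S' -> gain w S' <= gain w S.
Proof.
move=> sSS'; apply: ler_sum => y _; have [p_ge0 _] := p_distr w.
by rewrite ler_wpM2l // submodular_diminishing // g_subset.
Qed.

Lemma argmax_user_lex b S A :
  argmax_user f O p yW rk b S A = lex_argmax rk (Defs.ratio f O p yW b S) A.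
Proof. by []. Qed.

Definition admissible (b : W -> R) (st : state R W) (w : W) : bool :=
  (\sum_(s in sel st) b s + b w <= budget) &&
  (b w <= budget / alpha * (gain w (sel st) / (sumD st + gain w (sel st)))).

Lemma step_select b st w :
  ~~ stopped st -> argmax_user f O p yW rk b (sel st) (Defs.rem st) = Some w ->
  admissible b st w ->
  greedy_step b st = State (w |: sel st) (sumD st + gain w (sel st)) (Defs.rem st :\ w) false.
Proof. by rewrite /step => /negPf-> -> /andP[-> ->]. Qed.

Lemma admissible_of_step b st i :
  i \notin sel st -> i \in sel (greedy_step b st) -> admissible b st i.
Proof.
move=> /negPf i_nsel; rewrite /step; case: (stopped st); rewrite ?i_nsel //.
case: argmax_user => [w|]; rewrite /= ?i_nsel //.
case: ifP => [budget_ok|]; last by rewrite /= i_nsel.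
case: ifP => [thresh_ok|]; last by rewrite /= i_nsel.
by rewrite /= in_setU1 i_nsel orbF => /eqP->; rewrite /admissible budget_ok thresh_ok.
Qed.

Lemma sel_step_subset b st : sel st \subset sel (greedy_step b st).
Proof.
rewrite /step; case: (stopped st) => //; case: argmax_user => [w|] //=.
by case: ifP => _ //; case: ifP => _ //=; apply: subsetUr.
Qed.

Lemma sumD_step b st : sumD st <= sumD (greedy_step b st).
Proof.
rewrite /step; case: (stopped st) => //; case: argmax_user => [w|] //=.
by case: ifP => _ //; case: ifP => _ //=; rewrite lerDl cond_gain_ge0.
Qed.

Lemma sel_iter_subset b n st : sel st \subset sel (iter n (greedy_step b) st).
Proof.
by elim: n => //= n IHn; apply: subset_trans IHn (sel_step_subset _ _).
Qed.

Lemma iter_step_stopped b n st : stopped st -> iter n (greedy_step b) st = st.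
Proof. by move=> st_stop; elim: n => //= n ->; rewrite /step st_stop. Qed.

Lemma admissible_anti b st st' i :
  (forall w, 0 < b w) -> 0 <= sumD st ->
  sel st \subset sel st' -> sumD st <= sumD st' ->
  admissible b st' i -> admissible b st i.
Proof.
move=> b_gt0 sumD_ge0 sel_sub le_sumD /andP[budget_ok thresh_ok].
apply/andP; split.
  apply: le_trans budget_ok; rewrite lerD2r.
  by apply: ler_sum_subset => // w; apply: ltW.
have gain'_gt0 : 0 < gain i (sel st').
  rewrite lt_def cond_gain_ge0 andbT; apply: contraTneq thresh_ok => ->.
  by rewrite mul0r mulr0 -ltNge.
apply: (le_trans thresh_ok); rewrite ler_wpM2l ?ler_share ?le_cond_gain //.
exact: divr_ge0 (ltW budget_gt0) (le_trans ler01 alpha_ge1).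
Qed.

Lemma admissible_of_selected b n st i :
  (forall w, 0 < b w) -> 0 <= sumD st -> i \notin sel st ->
  i \in sel (iter n (greedy_step b) st) -> admissible b st i.
Proof.
move=> b_gt0; elim: n st => [|n IHn] st sumD_ge0 i_nsel; first by rewrite (negPf i_nsel).
rewrite iterSr; case: (boolP (i \in sel (greedy_step b st))) => [i_step _|i_nstep i_sel].
  exact: admissible_of_step.
apply: admissible_anti (sel_step_subset b st) (sumD_step b st) _ => //.
exact: IHn (le_trans sumD_ge0 (sumD_step b st)) i_nstep i_sel.
Qed.

Section UpdateBid.
Variables (b : W -> R) (i : W) (bi' : R).
Hypotheses (b_gt0 : forall w, 0 < b w) (bi'_gt0 : 0 < bi') (le_bi' : bi' <= b i).
Local Notation b' := (update_bid b i bi').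

Lemma update_bid_other v : v != i -> b' v = b v.
Proof. by rewrite /update_bid => /negPf->. Qed.

Lemma sum_update_bid (S : {set W}) :
  i \notin S -> \sum_(s in S) b' s = \sum_(s in S) b s.
Proof.
move=> iNS; apply: eq_bigr => s sS; apply: update_bid_other.
by apply: contraNneq iNS => <-.
Qed.

Lemma ratio_update_bid S v : Defs.ratio f O p yW b S v <= Defs.ratio f O p yW b' S v.
Proof.
rewrite /Defs.ratio /update_bid; case: eqP => [->|_] //.
by rewrite ler_wpM2l ?cond_gain_ge0 // lef_pV2 ?posrE.
Qed.

Lemma ratio_update_bid_other S v :
  v != i -> Defs.ratio f O p yW b' S v = Defs.ratio f O p yW b S v.
Proof. by move=> vi; rewrite /Defs.ratio update_bid_other. Qed.

Lemma admissible_update_bid st :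
  i \notin sel st -> admissible b st i -> admissible b' st i.
Proof.
move=> i_nsel /andP[budget_ok thresh_ok].
rewrite /admissible sum_update_bid // /update_bid eqxx.
by rewrite (le_trans _ budget_ok) ?lerD2l // (le_trans le_bi' thresh_ok).
Qed.

Lemma step_update_bid_other st w :
  i \notin sel st -> w != i ->
  argmax_user f O p yW rk b (sel st) (Defs.rem st) = Some w ->
  argmax_user f O p yW rk b' (sel st) (Defs.rem st) = Some w ->
  greedy_step b' st = greedy_step b st.
Proof.
by move=> i_nsel wi hw hw'; rewrite /step hw hw' sum_update_bid // update_bid_other.
Qed.

Lemma selected_update_bid n st :
  injective rk -> 0 <= sumD st -> i \notin sel st ->
  i \in sel (iter n (greedy_step b) st) -> i \in sel (iter n (greedy_step b') st).
Proof.
move=> rk_inj; elim: n st => [|n IHn] st sumD_ge0 i_nsel i_sel.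
  by rewrite (negPf i_nsel) in i_sel.
have adm := admissible_update_bid i_nsel (admissible_of_selected b_gt0 sumD_ge0 i_nsel i_sel).
case st_stop: (stopped st).
  by rewrite iter_step_stopped ?(negPf i_nsel) in i_sel.
have select_i : argmax_user f O p yW rk b' (sel st) (Defs.rem st) = Some i ->
    i \in sel (iter n.+1 (greedy_step b') st).
  move=> hi; rewrite iterSr (step_select (negbT st_stop) hi adm).
  by apply: (subsetP (sel_iter_subset _ _ _)); rewrite /= setU11.
move: i_sel; rewrite iterSr.
case hw: (argmax_user f O p yW rk b (sel st) (Defs.rem st)) => [w|]; last first.
  have -> : greedy_step b st = State (sel st) (sumD st) (Defs.rem st) true.
    by rewrite /step st_stop hw.
  by rewrite iter_step_stopped //= (negPf i_nsel).
have [hw'|] := lex_argmax_raise rk_inj (ratio_update_bid _) (ratio_update_bid_other _) hw;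
  last by move=> /select_i.
have [w_eq_i|w_ne_i] := eqVneq w i.
  by subst w => _; apply: select_i; rewrite argmax_user_lex.
rewrite [iter n.+1 _ _]iterSr (step_update_bid_other i_nsel w_ne_i hw hw') => i_sel.
have [i_step|i_nstep] := boolP (i \in sel (greedy_step b st)).
  exact: (subsetP (sel_iter_subset _ _ _)).
exact: IHn (le_trans sumD_ge0 (sumD_step b st)) i_nstep i_sel.
Qed.

End UpdateBid.
End SeqTGreedyMonotone.

Theorem lemma1 (R : realFieldType) (V W : finType)
  (f : {set V} -> R) (O : {set {set V}}) (p : W -> {set V} -> R)
  (yW : W -> {set V}) (rk : W -> nat) (budget alpha : R) :
  set_fun_nonneg f -> set_fun_monotone f -> set_fun_submodular f ->
  is_profile_distr O p ->
  (forall w, yW w \in O) ->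
  injective rk ->
  0 < budget -> 1 <= alpha ->
  forall (i : W) (b : W -> R) (bi' : R),
    (forall w, 0 < b w) -> 0 < bi' -> bi' <= b i ->
    i \in seqtgreedy_selected f O p yW rk budget alpha b ->
    i \in seqtgreedy_selected f O p yW rk budget alpha (update_bid b i bi').
Proof.
move=> _ f_mono f_submod p_distr _ rk_inj budget_gt0 alpha_ge1 i b bi' b_gt0 bi'_gt0 le_bi'.
by apply: selected_update_bid; rewrite ?in_set0.
Qed.
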